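(* The graph parameters $\widetilde{\Delta}$ and $\max\{\mathsf{cideg},\widetilde{\omega}\}$ are equivalent, i.e. there exist functions $f,g\colon\mathbb{N}\to\mathbb{N}$ such that for every finite graph $G$, $\widetilde{\Delta}(G)\le f(\max\{\mathsf{cideg}(G),\widetilde{\omega}(G)\})$ and $\max\{\mathsf{cideg}(G),\widetilde{\omega}(G)\}\le g(\widetilde{\Delta}(G))$.
   Context: Two vertices of $G$ are equivalent if they lie in exactly the same maximal cliques of $G$. The clique-quotient graph $\widetilde{G}$ has the equivalence classes as vertices, two distinct classes being adjacent iff some (equivalently every) pair of representatives is adjacent in $G$. $\widetilde{\Delta}(G)$ is the maximum degree of $\widetilde{G}$. $\widetilde{\omega}(G)$ is the maximum over maximal cliques $K$ of the number of equivalence classes meeting $K$; $\mathsf{cideg}(G)$ is the maximum over vertices $v$ of the number of maximal cliques containing $v$. *)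

From mathcomp Require Import all_boot.
Set Implicit Arguments. Unset Strict Implicit. Unset Printing Implicit Defensive.

(* A finite simple graph is given by a vertex type T : finType and an
   adjacency relation e : rel T, assumed symmetric and irreflexive
   (these hypotheses appear in the theorem). *)
Section CliqueQuotient.
Variables (T : finType) (e : rel T).

Definition is_clique (K : {set T}) : bool :=
  [forall x in K, forall y in K, (x != y) ==> e x y].

Definition is_maxclique (K : {set T}) : bool := maxset is_clique K.

Definition cq_equiv (x y : T) : bool :=
  [forall K : {set T}, is_maxclique K ==> ((x \in K) == (y \in K))].

Definition cq_class (v : T) : {set T} := [set u | cq_equiv u v].

Definition cq_classes : {set {set T}} := [set cq_class v | v in T].

Definition cq_adj (C D : {set T}) : bool :=
  (C != D) && [exists x in C, exists y in D, e x y].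

Definition cq_deg (C : {set T}) : nat := #|[set D in cq_classes | cq_adj C D]|.

Definition cq_Delta : nat := \max_(C in cq_classes) cq_deg C.

Definition cq_omega : nat :=
  \max_(K | is_maxclique K) #|[set C in cq_classes | [exists v in K, v \in C]]|.

Definition cideg : nat :=
  \max_(v : T) #|[set K | is_maxclique K & v \in K]|.

End CliqueQuotient.

From mathcomp Require Import all_boot.
Set Implicit Arguments. Unset Strict Implicit. Unset Printing Implicit Defensive.

(* An edge from the class of v to a neighbouring class lies in a maximal
   clique, which contains v because it contains a vertex equivalent to v.  So
   every neighbouring class meets one of the at most cideg maximal cliques
   through v, each of which meets at most omega~ classes: Delta~ <= cideg *
   omega~.  Conversely, distinct classes meeting a common maximal clique are
   adjacent, so omega~ <= Delta~ + 1; and a maximal clique through v is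
   determined by the neighbouring classes of the class of v that it contains,
   so cideg <= 2 ^ Delta~. *)

Section CliqueQuotientBounds.
Variables (T : finType) (e : rel T).

Lemma cq_equiv_refl : reflexive (cq_equiv e).
Proof. by move=> x; apply/forallP => K; apply/implyP. Qed.

Lemma cq_equiv_sym : symmetric (cq_equiv e).
Proof.
suff imp x y : cq_equiv e x y -> cq_equiv e y x.
  by move=> x y; apply/idP/idP; apply: imp.
move/forallP=> xy; apply/forallP => K; apply/implyP=> maxK.
by rewrite eq_sym; apply: (implyP (xy K)).
Qed.

Lemma cq_equiv_trans : transitive (cq_equiv e).
Proof.
move=> y x z /forallP xy /forallP yz; apply/forallP => K; apply/implyP=> maxK.
by rewrite (eqP (implyP (xy K) maxK)) (eqP (implyP (yz K) maxK)).
Qed.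

Definition classes_meeting (K : {set T}) : {set {set T}} :=
  [set C in cq_classes e | [exists v in K, v \in C]].

Definition maxcliques_through (v : T) : {set {set T}} :=
  [set K | is_maxclique e K & v \in K].

Definition cq_nbhd (C : {set T}) : {set {set T}} :=
  [set D in cq_classes e | cq_adj e C D].

Lemma card_classes_meeting_le_omega K :
  is_maxclique e K -> #|classes_meeting K| <= cq_omega e.
Proof. exact: (@leq_bigmax_cond _ (is_maxclique e) (fun K => #|classes_meeting K|)). Qed.

Lemma card_maxcliques_through_le_cideg v : #|maxcliques_through v| <= cideg e.
Proof. exact: (@leq_bigmax_cond _ xpredT (fun v => #|maxcliques_through v|)). Qed.

Lemma card_cq_nbhd_le_Delta C : C \in cq_classes e -> #|cq_nbhd C| <= cq_Delta e.
Proof. exact: (@leq_bigmax_cond _ (mem (cq_classes e)) (cq_deg e)). Qed.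

Lemma maxclique_equiv K x y :
  is_maxclique e K -> cq_equiv e x y -> (x \in K) = (y \in K).
Proof. by move=> maxK /forallP/(_ K)/implyP/(_ maxK)/eqP. Qed.

Lemma mem_cq_class v : v \in cq_class e v.
Proof. by rewrite inE cq_equiv_refl. Qed.

Lemma eq_cq_class x y : (cq_class e x == cq_class e y) = cq_equiv e x y.
Proof.
apply/idP/idP => [/eqP eq_xy | xy]; first by have := mem_cq_class x; rewrite eq_xy inE.
apply/eqP/setP => z; rewrite !inE; apply/idP/idP => [zx | zy].
  exact: cq_equiv_trans zx xy.
by apply: cq_equiv_trans zy _; rewrite cq_equiv_sym.
Qed.

Lemma cq_class_in_classes v : cq_class e v \in cq_classes e.
Proof. exact: imset_f. Qed.

Lemma cq_classes_mem C x : C \in cq_classes e -> x \in C -> C = cq_class e x.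
Proof.
by case/imsetP=> v _ ->; rewrite inE => xv; apply/eqP; rewrite eq_sym eq_cq_class.
Qed.

Lemma cq_class_sub_maxclique K x :
  is_maxclique e K -> x \in K -> cq_class e x \subset K.
Proof.
by move=> maxK xK; apply/subsetP => y; rewrite inE => /(maxclique_equiv maxK) ->.
Qed.

Lemma maxclique_adj K x y :
  is_maxclique e K -> x \in K -> y \in K -> x != y -> e x y.
Proof.
move=> /maxsetp/forallP/(_ x)/implyP clK xK yK.
by move: (clK xK) => /forallP/(_ y)/implyP/(_ yK)/implyP.
Qed.

Lemma cq_adj_maxclique K x y :
  is_maxclique e K -> x \in K -> y \in K -> ~~ cq_equiv e x y ->
  cq_adj e (cq_class e x) (cq_class e y).
Proof.
move=> maxK xK yK xy; rewrite /cq_adj eq_cq_class xy /=.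
apply/existsP; exists x; rewrite mem_cq_class /=.
apply/existsP; exists y; rewrite mem_cq_class /=.
by apply: (maxclique_adj maxK) => //; apply: contraNneq xy => ->; apply: cq_equiv_refl.
Qed.

Lemma classes_meeting_sub_nbhd K x :
  is_maxclique e K -> x \in K ->
  classes_meeting K :\ cq_class e x \subset cq_nbhd (cq_class e x).
Proof.
move=> maxK xK; apply/subsetP => D; rewrite !inE => /andP[Dx /andP[DQ]].
case/existsP=> y /andP[yK yD]; rewrite DQ.
rewrite (cq_classes_mem DQ yD) in Dx *.
by apply: (cq_adj_maxclique maxK) => //; rewrite -eq_cq_class eq_sym.
Qed.

Lemma cq_omega_le_Delta : cq_omega e <= (cq_Delta e).+1.
Proof.
apply/bigmax_leqP => K maxK; rewrite -/(classes_meeting K).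
have [->|[C CK]] := set_0Vmem (classes_meeting K); first by rewrite cards0.
rewrite (cardsD1 C) CK ltnS.
move: CK; rewrite inE => /andP[CQ /existsP[x /andP[xK xC]]].
rewrite (cq_classes_mem CQ xC).
apply: leq_trans (card_cq_nbhd_le_Delta (cq_class_in_classes x)).
exact/subset_leq_card/classes_meeting_sub_nbhd.
Qed.

Definition nbhd_classes_in (v : T) (K : {set T}) : {set {set T}} :=
  [set D in cq_nbhd (cq_class e v) | D \subset K].

Lemma maxclique_sub_nbhd_classes v K1 K2 :
  K1 \in maxcliques_through v -> K2 \in maxcliques_through v ->
  nbhd_classes_in v K1 \subset nbhd_classes_in v K2 -> K1 \subset K2.
Proof.
rewrite !inE => /andP[maxK1 vK1] /andP[maxK2 vK2] /subsetP sub12.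
apply/subsetP => x xK1; have [xv | xNv] := boolP (cq_equiv e x v).
  by rewrite (maxclique_equiv maxK2 xv).
have xN : cq_class e x \in nbhd_classes_in v K1.
  rewrite !inE cq_class_in_classes (cq_class_sub_maxclique maxK1 xK1) andbT.
  by apply: (cq_adj_maxclique maxK1) => //; rewrite cq_equiv_sym.
by have := sub12 _ xN; rewrite inE => /andP[_ /subsetP]; apply; apply: mem_cq_class.
Qed.

Lemma cideg_le_exp_Delta : cideg e <= 2 ^ cq_Delta e.
Proof.
apply/bigmax_leqP => v _; rewrite -/(maxcliques_through v).
have inj : {in maxcliques_through v &, injective (nbhd_classes_in v)}.
  move=> K1 K2 K1v K2v eqK; apply/eqP; rewrite eqEsubset.
  by rewrite (maxclique_sub_nbhd_classes K1v K2v) ?eqK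
             ?(maxclique_sub_nbhd_classes K2v K1v) ?eqK.
rewrite -(card_in_imset inj).
apply: (@leq_trans #|powerset (cq_nbhd (cq_class e v))|).
  apply/subset_leq_card/subsetP => X /imsetP[K _ ->].
  by rewrite inE; apply/subsetP => D; rewrite inE => /andP[].
by rewrite card_powerset leq_pexp2l // card_cq_nbhd_le_Delta // cq_class_in_classes.
Qed.

Section SymmetricAdjacency.
Hypothesis esym : symmetric e.

Lemma clique_pair x y : e x y -> is_clique e [set x; y].
Proof.
move=> xy; apply/forallP => a; apply/implyP; rewrite !inE => ax_y.
apply/forallP => b; apply/implyP; rewrite !inE => bx_y.
by case/orP: ax_y => /eqP ->; case/orP: bx_y => /eqP ->;
  rewrite ?eqxx // ?(esym y) xy implybT.
Qed.

Lemma edge_in_maxclique x y :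
  e x y -> exists2 K, is_maxclique e K & (x \in K) && (y \in K).
Proof.
move=> /clique_pair/maxset_exists[K maxK /subsetP sub]; exists K => //.
by rewrite !sub // !inE eqxx ?orbT.
Qed.

Lemma cq_nbhd_sub_cover v :
  cq_nbhd (cq_class e v) \subset cover (classes_meeting @: maxcliques_through v).
Proof.
apply/subsetP => D; rewrite inE => /andP[DQ /andP[_]].
case/existsP=> x /andP[+ /existsP[y /andP[yD xy]]]; rewrite inE => xv.
have [K maxK /andP[xK yK]] := edge_in_maxclique xy.
apply/bigcupP; exists (classes_meeting K).
  by apply: imset_f; rewrite inE maxK -(maxclique_equiv maxK xv).
by rewrite inE DQ; apply/existsP; exists y; rewrite yK.
Qed.

Lemma cq_Delta_le_cideg_omega : cq_Delta e <= cideg e * cq_omega e.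
Proof.
apply/bigmax_leqP => C /imsetP[v _ ->].
apply: leq_trans (subset_leq_card (cq_nbhd_sub_cover v)) _.
apply: leq_trans (leq_card_cover _) _.
apply: (@leq_trans (\sum_(A in classes_meeting @: maxcliques_through v) cq_omega e)).
  apply: leq_sum => A /imsetP[K]; rewrite inE => /andP[maxK _] ->.
  exact: card_classes_meeting_le_omega.
rewrite sum_nat_const leq_mul //.
exact: leq_trans (leq_imset_card _ _) (card_maxcliques_through_le_cideg v).
Qed.

End SymmetricAdjacency.
End CliqueQuotientBounds.

Theorem corollary3p5 :
  exists f g : nat -> nat,
    forall (T : finType) (e : rel T),
      symmetric e -> irreflexive e ->
      cq_Delta e <= f (maxn (cideg e) (cq_omega e)) /\
      maxn (cideg e) (cq_omega e) <= g (cq_Delta e).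
Proof.
exists (fun k => k * k), (fun d => 2 ^ d + d.+1) => T e esym _; split.
  apply: leq_trans (cq_Delta_le_cideg_omega esym) _.
  by apply: leq_mul; rewrite ?leq_maxl ?leq_maxr.
rewrite geq_max (leq_trans (cideg_le_exp_Delta e)) ?leq_addr //.
exact: leq_trans (cq_omega_le_Delta e) (leq_addl _ _).
Qed.
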